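(* Let $n\ge2$, $\mathbf b\in\mathbb R^{n-1}$ with $\mathbf b\notin\mathcal W^+_n(1,n-1)$, and $v>n$. For $Q>0$ let $\mathcal A(\mathbf b,v,Q)$ be the set of $x\in[0,1)$ for which $|p+(\tilde{\mathbf b}\mathbf q)x|<Q^{-v}$ for some $p\in\mathbb Z$ and $\mathbf q=(q_0,\dots,q_{n-1})^T\in\mathbb Z^n$ with $Q\le\|\mathbf q\|<2Q$, where $\tilde{\mathbf b}=(1,b_1,\dots,b_{n-1})$. Then there exists $C=C(\mathbf b,v)>0$ such that $|\mathcal A(\mathbf b,v,Q)|<CQ^{\frac{n-v}2}$ for all $Q>1$.
   Context: Sup-norms; $|\cdot|$ is Lebesgue measure. $\mathbf b\in\mathcal W_u(1,n-1)$ means there are infinitely many $\mathbf q\in\mathbb Z^{n-1}$ with $|\mathbf b\mathbf q+p|\le\|\mathbf q\|^{-u}$ for some $p\in\mathbb Z$; $\mathcal W^+_n(1,n-1)=\bigcup_{u>n}\mathcal W_u(1,n-1)$. *)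

From HB Require Import structures.
From mathcomp Require Import all_boot all_order all_algebra.
From mathcomp Require Import all_classical all_reals all_analysis.
Set Implicit Arguments. Unset Strict Implicit. Unset Printing Implicit Defensive.
Import Order.TTheory GRing.Theory Num.Theory.
Local Open Scope classical_set_scope.
Local Open Scope ring_scope.

Definition supn (k : nat) (q : 'rV[int]_k) : nat := \max_(i < k) `|q ord0 i|%N.

Definition W_u (R : realType) (k : nat) (u : R) : set 'rV[R]_k :=
  [set b | infinite_set [set q : 'rV[int]_k |
     exists p : int, `|\sum_(i < k) b ord0 i * (q ord0 i)%:~R + p%:~R|
                       <= ((supn q)%:R : R) `^ (- u)]].

Definition W_plus (R : realType) (n : nat) : set 'rV[R]_(n.-1) :=
  \bigcup_(u in [set u : R | (n%:R < u)%R]) @W_u R (n.-1) u.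

(* btilde = (1, b_1, ..., b_{n-1}) as a function of the index 0..n-1 *)
Definition btilde (R : realType) (n : nat) (b : 'rV[R]_(n.-1)) (i : 'I_n) : R :=
  if val i is k.+1 then
    (if insub k is Some j then b ord0 j else 0)
  else 1.

Definition btq (R : realType) (n : nat) (b : 'rV[R]_(n.-1)) (q : 'rV[int]_n) : R :=
  \sum_(i < n) btilde b i * (q ord0 i)%:~R.

Definition A_set (R : realType) (n : nat) (b : 'rV[R]_(n.-1)) (v Q : R) : set R :=
  [set x | 0 <= x < 1 /\
     exists (p : int) (q : 'rV[int]_n),
       Q <= (supn q)%:R < 2 * Q /\ `|p%:~R + btq b q * x| < Q `^ (- v)].

From HB Require Import structures.
From mathcomp Require Import all_boot all_order all_algebra.
From mathcomp Require Import all_classical all_reals all_analysis.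
From mathcomp Require Import ring lra zify.
Import Order.TTheory GRing.Theory Num.Theory.
Set Implicit Arguments. Unset Strict Implicit. Unset Printing Implicit Defensive.
Local Open Scope classical_set_scope.
Local Open Scope ring_scope.

(* Since b is not in W_u(1, n-1) for u := n + (v - n)/4, the good approximations
   of exponent u are finitely many, so |btilde q| >= c ||q||^-u for every nonzero
   q in Z^n.  The set A(b, v, Q) is covered by the strips
   {x | dist((btilde q) x, Z) < Q^-v}, each of measure O(Q^-v (1 + 1/|btilde q|)).
   The values btilde q over the box ||q|| <= 2Q are c (4Q)^-u apart and O(Q) in
   size, so the sum of their reciprocals is O(Q^u log Q).  Altogether
   |A(b, v, Q)| = O(Q^(n-v) + Q^(u-v) log Q) = O(Q^((n-v)/2)). *)

Section outer_measure_finite_subadditivity.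
Context {T : Type} {R : realType} (mu : {outer_measure set T -> \bar R}).

Lemma outer_measure_bigcup_seq (I : eqType) (s : seq I) (F : I -> set T) :
  (mu (\bigcup_(i in [set i | i \in s]) F i) <= \sum_(i <- s) mu (F i))%E.
Proof.
elim: s => [|x s IH].
  rewrite big_nil (_ : \bigcup_(i in _) _ = set0) ?outer_measure0//.
  by apply/seteqP; split => // y [i].
rewrite big_cons; apply: le_trans (leeD2l _ IH).
apply: le_trans (outer_measureU2 _ _ _).
apply: le_outer_measure => y [i] /=; rewrite in_cons => /orP[/eqP->|iin] Fy.
  by left.
by right; exists i.
Qed.

Lemma outer_measure_bigcup_fin (I : finType) (F : I -> set T) :
  (mu (\bigcup_i F i) <= \sum_i mu (F i))%E.
Proof.
have := outer_measure_bigcup_seq (enum I) F; rewrite big_enum /=.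
apply: le_trans; apply: le_outer_measure => y [i _ Fy]; exists i => //=.
by rewrite mem_enum.
Qed.

End outer_measure_finite_subadditivity.

Section strip.
Variable R : realType.

Definition strip (a d : R) : set R :=
  [set x | 0 <= x < 1 /\ exists p : int, `|p%:~R + a * x| < d].

(* [strip a d] is covered by the balls of radius [d / |a|] around the points
   [- j / a] with [|j| <= J := truncn |a| + 1]. *)
Lemma lebesgue_measure_strip_le (a d : R) : a != 0 -> 0 <= d <= 1 ->
  (lebesgue_measure (strip a d) <= (4 * d + 6 * d / `|a|)%:E)%E.
Proof.
move=> a0 /andP[d0 d1]; set J := (Num.truncn `|a|).+1.
have a_gt0 : 0 < `|a| by rewrite normr_gt0.
pose G (j : 'I_(2 * J).+1) : set R := ball (- ((j%:Z - J%:Z)%:~R) / a) (d / `|a|).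
have sub : strip a d `<=` \bigcup_j G j.
  move=> x [/andP[x0 x1] [p hp]].
  have hpa : `|p%:~R| < `|a| + 1 :> R.
    have -> : (p%:~R : R) = (p%:~R + a * x) - a * x by rewrite addrK.
    have ax_le : `|a * x| <= `|a| by rewrite normrM (ger0_norm x0) ler_piMr// ltW.
    have := ler_normB (p%:~R + a * x) (a * x); lra.
  have hpJ : (`|p| <= J)%N.
    rewrite leqNgt; apply/negP => Jp; have := truncnS_gt `|a|.
    move: Jp; rewrite -(ler_nat R).
    by move: hpa; rewrite -intr_norm -natr_absz /J -!natr1; lra.
  have jlt : ((absz (p + J%:Z)%R) < (2 * J).+1)%N by move: hpJ; lia.
  exists (Ordinal jlt) => //; rewrite /G /= -ball_normE /=.
  have -> : ((absz (p + J%:Z)%R)%:Z - J%:Z) = p by move: hpJ; lia.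
  have -> : - (p%:~R) / a - x = - ((p%:~R + a * x) / a) by field.
  by rewrite normrN normrM normfV ltr_pM2r // invr_gt0.
apply: le_trans (le_outer_measure lebesgue_measure _ _ sub) _.
apply: le_trans (_ : _ <= \sum_j lebesgue_measure (G j))%E _.
  exact: outer_measure_bigcup_fin.
rewrite (eq_bigr (fun=> ((d / `|a|) *+ 2)%:E)); last first.
  by move=> j _; rewrite /G lebesgue_measure_ball // divr_ge0.
rewrite sumEFin lee_fin sumr_const card_ord.
have hJ : (J%:R : R) <= `|a| + 1 by rewrite /J -natr1 lerD2r truncn_le normr_ge0.
have -> : 4 * d + 6 * d / `|a| = (d / `|a|) * (4 * `|a| + 6).
  by field; rewrite gt_eqF.
rewrite -mulrnA -[X in X <= _]mulr_natr; apply: ler_wpM2l; first by rewrite divr_ge0.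
by move: hJ; lra.
Qed.

End strip.

Section real_estimates.
Local Close Scope classical_set_scope.
Variable R : realType.

Lemma powRN_le1 (x u : R) : 1 <= x -> 0 <= u -> x `^ (- u) <= 1.
Proof. by move=> x1 u0; rewrite -(powRr0 x); apply: ler_powR => //; lra. Qed.

Lemma ler_powRN (x y u : R) : 0 < x -> x <= y -> 0 <= u ->
  y `^ (- u) <= x `^ (- u).
Proof.
move=> x0 xy u0; have y0 : 0 < y by exact: lt_le_trans x0 xy.
rewrite !powRN lef_pV2 ?posrE ?powR_gt0 //.
by apply: ge0_ler_powR => //; rewrite nnegrE ltW.
Qed.

Lemma ln_le_powR_div (x e : R) : 0 < x -> 0 < e -> ln x <= x `^ e / e.
Proof.
move=> x0 e0; have := expR_ge1Dx (e * ln x).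
rewrite /powR gt_eqF // ler_pdivlMr // mulrC; lra.
Qed.

Lemma harmonic_sum_le_ln (M : nat) :
  \sum_(j < M.+1) ((j.+1)%:R : R)^-1 <= 1 + ln (M.+1)%:R.
Proof.
elim: M => [|M IH]; first by rewrite big_ord_recr big_ord0 /= add0r ln1 addr0 invr1.
rewrite big_ord_recr /=.
have step : ((M.+2)%:R : R)^-1 <= ln (M.+2)%:R - ln (M.+1)%:R.
  have := @le_ln1Dx R (- ((M.+2)%:R)^-1).
  have -> : 1 - ((M.+2)%:R : R)^-1 = (M.+1)%:R / (M.+2)%:R.
    by field; rewrite gt_eqF // ltr0n.
  rewrite ln_div ?posrE ?ltr0n // ltrN2 invf_lt1 ?ltr0n // ltr1n => /(_ isT).
  by set z := (_ ^-1); lra.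
move: IH step; set z := (_ ^-1); set L := ln (M.+1)%:R; lra.
Qed.

Lemma floor_norm_bounds (r : R) : 1 <= `|r| ->
  [/\ Num.floor r != 0, `|(Num.floor r)%:~R : R| <= 2 * `|r|
    & `|(Num.floor r)%:~R : R| <= `|r| + 1].
Proof.
move=> r1; set m := Num.floor r.
have fa : m%:~R <= r by exact: floor_le.
have fb : r < m%:~R + 1 by have := floorD1_gt r; rewrite intrD.
split.
- apply/negP => /eqP m0; move: fa fb r1; rewrite m0.
  by have [r0|r0] := lerP 0 r; [rewrite ger0_norm | rewrite ltr0_norm]; lra.
- have [r0|r0] := lerP 0 r; have [m0|m0] := lerP 0 (m%:~R : R);
    rewrite ?(ger0_norm r0) ?(ltr0_norm r0) ?(ger0_norm m0) ?(ltr0_norm m0);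
    move: r1; rewrite ?(ger0_norm r0) ?(ltr0_norm r0); lra.
- have [r0|r0] := lerP 0 r; have [m0|m0] := lerP 0 (m%:~R : R);
    rewrite ?(ger0_norm r0) ?(ltr0_norm r0) ?(ger0_norm m0) ?(ltr0_norm m0);
    move: r1; rewrite ?(ger0_norm r0) ?(ltr0_norm r0); lra.
Qed.

Lemma floor_eq_norm_subr_lt1 (x y : R) :
  Num.floor x = Num.floor y -> `|x - y| < 1.
Proof.
move=> exy; have fx := floor_le x; have fy := floor_le y.
have := floorD1_gt x; have := floorD1_gt y; rewrite !intrD exy in fx *.
by move=> gy gx; rewrite ltr_norml; apply/andP; split; lra.
Qed.

Lemma dist_int_gt0 (y : R) : (forall p : int, y + p%:~R != 0) ->
  exists2 d : R, 0 < d & forall p : int, d <= `|y + p%:~R|.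
Proof.
move=> y_notint; set f := Num.floor y.
have fa : f%:~R <= y by exact: floor_le.
have fb : y < f%:~R + 1 by have := floorD1_gt y; rewrite intrD.
have f0 : 0 < y - f%:~R.
  by rewrite lt_neqAle eq_sym subr_ge0 fa andbT; have := y_notint (- f); rewrite intrN.
exists (Num.min (y - f%:~R) (1 - (y - f%:~R))); first by rewrite lt_min f0 /=; lra.
move=> p; rewrite ge_min; case: (lerP (- p) f) => hp.
  apply/orP; left; move: hp; rewrite -(ler_int R) intrN => hp.
  by apply: le_trans (ler_norm _); lra.
apply/orP; right; have : (f + 1 <= - p)%R by lia.
rewrite -(ler_int R) intrN intrD => hp'.
by rewrite -normrN; apply: le_trans (ler_norm _); lra.
Qed.

Lemma invr_norm_le_floor (a s : R) : 0 < s -> s <= `|a| ->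
  `|a|^-1 <= 2 / s * `|(Num.floor (a / s))%:~R : R|^-1.
Proof.
move=> s0 sa; set m := Num.floor (a / s).
have r1 : 1 <= `|a / s| by rewrite normrM normfV (gtr0_norm s0) ler_pdivlMr // mul1r.
have [m0 hb _] := floor_norm_bounds r1.
have m_gt0 : 0 < `|m%:~R : R| by rewrite normr_gt0 intr_eq0.
have -> : 2 / s * `|m%:~R : R|^-1 = (s * `|m%:~R : R| / 2)^-1.
  by field; rewrite ?gt_eqF.
rewrite lef_pV2 ?posrE ?divr_gt0 ?mulr_gt0 ?(lt_le_trans s0 sa) //.
move: hb; rewrite normrM normfV (gtr0_norm s0) => hb.
have : `|m%:~R : R| * s <= 2 * (`|a| / s) * s by rewrite ler_pM2r.
by rewrite -mulrA divfK ?gt_eqF //; lra.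
Qed.

(* Grouping the [a t] by [floor (a t / s)]: distinct indices have distinct
   nonzero floors [m], and [|a t| >= s |m| / 2], so the sum is at most twice
   (one per sign) a harmonic sum up to [A / s]. *)
Lemma sum_inv_separated_le (T : finType) (P : pred T) (a : T -> R) (s A : R) :
  0 < s ->
  (forall t, P t -> s <= `|a t|) ->
  (forall t t', P t -> P t' -> t != t' -> s <= `|a t - a t'|) ->
  (forall t, P t -> `|a t| <= A) ->
  \sum_(t | P t) `|a t|^-1 <= 4 / s * (1 + ln ((Num.truncn (A / s)).+1)%:R).
Proof.
move=> s0 a_ge a_sep a_le; set M := Num.truncn (A / s).
pose m t := Num.floor (a t / s).
pose h t : bool * 'I_M.+1 := ((0 < m t)%R, inord (`|m t|%N.-1)).
have r1 t : P t -> 1 <= `|a t / s|.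
  by move=> Pt; rewrite normrM normfV (gtr0_norm s0) ler_pdivlMr // mul1r a_ge.
have hM t : P t -> (`|m t|%N.-1 < M.+1)%N.
  move=> Pt; have [m0 _ hb] := floor_norm_bounds (r1 t Pt).
  have A0 : 0 <= A by apply: le_trans (a_le t Pt); exact: normr_ge0.
  rewrite ltnS truncn_ge_nat ?divr_ge0 ?(ltW s0) //.
  have ha : `|a t / s| <= A / s.
    by rewrite normrM normfV (gtr0_norm s0) ler_pM2r ?invr_gt0 // a_le.
  rewrite -subn1 natrB ?absz_gt0 // natr_absz intr_norm; move: hb ha; lra.
pose F (k : bool * 'I_M.+1) : R := 2 / s * (((k.2 : nat).+1)%:R)^-1.
have F0 k : 0 <= F k by rewrite /F mulr_ge0 ?divr_ge0 ?invr_ge0 ?ltW.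
have le_F t : P t -> `|a t|^-1 <= F (h t).
  move=> Pt; have [m0 _ _] := floor_norm_bounds (r1 t Pt).
  rewrite /F /h /= inordK ?hM // prednK ?absz_gt0 // natr_absz intr_norm.
  exact: invr_norm_le_floor (a_ge t Pt).
have h_inj : {in [set t | P t] &, injective h}.
  move=> t t'; rewrite !inE => Pt Pt' /= [e1 e2].
  apply/eqP; apply: contraT => ne; have := a_sep t t' Pt Pt' ne.
  have := congr1 val e2; rewrite /= !inordK ?hM // => e3.
  have [m0 _ _] := floor_norm_bounds (r1 t Pt).
  have [m0' _ _] := floor_norm_bounds (r1 t' Pt').
  have /floor_eq_norm_subr_lt1 : m t = m t'.
    by move: e1 e3 m0 m0'; rewrite -/(m t) -/(m t'); lia.
  rewrite -mulrBl normrM normfV (gtr0_norm s0) ltr_pdivrMr // mul1r => lt1 le1.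
  by have := lt_le_trans lt1 le1; rewrite ltxx.
apply: le_trans (ler_sum _ le_F) _.
rewrite (eq_bigl (fun t => t \in [set t | P t])); last by move=> t; rewrite inE.
rewrite -(big_imset _ h_inj) /=.
apply: le_trans (_ : \sum_k F k <= _).
  by rewrite [X in _ <= X](bigID (mem (h @: [set t | P t]))) /= lerDl sumr_ge0.
rewrite -(pair_big xpredT xpredT (fun b j => F (b, j))) big_bool /= /F.
rewrite -mulr_sumr -mulrDl (_ : 2 / s + 2 / s = 4 / s); last by field; rewrite gt_eqF.
by apply: ler_wpM2l; [rewrite divr_ge0 ?ltW | exact: harmonic_sum_le_ln].
Qed.

End real_estimates.

Section supn.
Variable k : nat.
Implicit Type q : 'rV[int]_k.

Lemma leq_supn q i : (`|q ord0 i| <= supn q)%N.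
Proof. exact: leq_bigmax. Qed.

Lemma supn_eq0 q : (supn q == 0%N) = (q == 0).
Proof.
apply/eqP/eqP => [q0|->]; last first.
  by apply/eqP; rewrite -leqn0; apply/bigmax_leqP => i _; rewrite mxE.
apply/rowP => i; have := leq_supn q i.
by rewrite q0 leqn0 absz_eq0 mxE => /eqP.
Qed.

Lemma supn_gt0 q : q != 0 -> (0 < supn q)%N.
Proof. by rewrite lt0n supn_eq0. Qed.

End supn.



Section diophantine.
Variables (R : realType) (m : nat) (b : 'rV[R]_m).

Definition bdot (q : 'rV[int]_m) : R := \sum_(i < m) b ord0 i * (q ord0 i)%:~R.

(* [W_u b u] is convertible to [~ finite_set (good_approx u)]. *)
Definition good_approx (u : R) : set 'rV[int]_m :=
  [set q | exists p : int, `|bdot q + p%:~R| <= (supn q)%:R `^ (- u)].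

Definition rbehead (q : 'rV[int]_m.+1) : 'rV[int]_m := \row_j q ord0 (lift ord0 j).

Lemma btq_rbehead (q : 'rV[int]_m.+1) :
  btq (n := m.+1) b q = bdot (rbehead q) + (q ord0 ord0)%:~R.
Proof.
rewrite /btq big_ord_recl /btilde /= mul1r addrC; congr (_ + _).
apply: eq_bigr => j _; rewrite mxE /= (insubT (fun k => k < m)%N (ltn_ord j)) /=.
by congr (b _ _ * _); apply: val_inj.
Qed.

Lemma supn_rbehead (q : 'rV[int]_m.+1) : (supn (rbehead q) <= supn q)%N.
Proof. by apply/bigmax_leqP => j _; rewrite mxE; apply: leq_supn. Qed.

Lemma rbehead_eq0 (q : 'rV[int]_m.+1) :
  rbehead q = 0 -> q != 0 -> q ord0 ord0 != 0.
Proof.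
move=> /rowP rq0; apply: contra => /eqP q00; apply/eqP/rowP => j; rewrite mxE.
by case: (unliftP ord0 j) => [k ->|->] //; have := rq0 k; rewrite !mxE.
Qed.

Lemma bdotZ (k : int) (q : 'rV[int]_m) : bdot (k *: q) = k%:~R * bdot q.
Proof. by rewrite /bdot mulr_sumr; apply: eq_bigr => i _; rewrite mxE intrM; ring. Qed.

(* An exact relation [bdot q + p = 0] would give the infinitely many good
   approximations [k q], [k] in N. *)
Lemma finite_good_approx_bdotD_neq0 u : finite_set (good_approx u) ->
  forall q, q != 0 -> forall p : int, bdot q + p%:~R != 0.
Proof.
move=> /finite_fsetP[X eX] q q0 p; apply/negP => /eqP qp0.
pose N := (\max_(x <- finmap.enum_fset X) supn x)%N.
have good : good_approx u ((N.+1)%:Z *: q).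
  exists (N.+1%:Z * p); rewrite bdotZ intrM -mulrDr qp0 mulr0 normr0.
  exact: powR_ge0.
have inX : (N.+1)%:Z *: q \in finmap.enum_fset X by move: good; rewrite eX.
have le_N := @leq_bigmax_seq _ _ xpredT (fun x => supn x) _ inX isT.
have [i qi] : exists i, q ord0 i != 0.
  apply/existsP; apply: contraR q0 => /existsPn qi0.
  by apply/eqP/rowP => i; rewrite mxE; apply/eqP; rewrite -[_ == _]negbK qi0.
have := leq_trans (leq_supn _ i) le_N; rewrite mxE abszM /=.
by rewrite leqNgt leq_pmulr ?absz_gt0.
Qed.

Lemma bdotD_bounded_below (l : seq 'rV[int]_m) :
  (forall q, q != 0 -> forall p : int, bdot q + p%:~R != 0) ->
  exists2 c : R, 0 < c &
    forall q, q \in l -> q != 0 -> forall p : int, c <= `|bdot q + p%:~R|.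
Proof.
move=> notint; elim: l => [|x l [c c0 hc]]; first by exists 1.
have [->|x0] := eqVneq x 0.
  by exists c => // q; rewrite in_cons => /orP[/eqP->|/hc//]; rewrite eqxx.
have [d d0 hd] := dist_int_gt0 (notint x x0).
exists (Num.min c d); first by rewrite lt_min c0 d0.
move=> q; rewrite in_cons => /orP[/eqP->|ql] q0 p; rewrite ge_min.
  by rewrite hd orbT.
by rewrite hc.
Qed.

(* Outside the finite set of good approximations the defining inequality fails;
   on it, the distance to the integers is bounded below by a constant. *)
Lemma btq_lower_bound (u : R) : 0 <= u -> finite_set (good_approx u) ->
  exists2 c : R, 0 < c & forall q : 'rV[int]_m.+1, q != 0 ->
    c * (supn q)%:R `^ (- u) <= `|btq (n := m.+1) b q|.
Proof.
move=> u0 fin; have [X eX] := finite_fsetP.1 fin.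
have [c0 c0_gt0 hc0] :=
  bdotD_bounded_below (finmap.enum_fset X) (finite_good_approx_bdotD_neq0 fin).
set c := Num.min c0 1; exists c; first by rewrite lt_min c0_gt0 ltr01.
move=> q q0; rewrite btq_rbehead.
have c_ge0 : 0 <= c by rewrite le_min (ltW c0_gt0) ler01.
have c_le1 : c <= 1 by rewrite ge_min lexx orbT.
have c_le_c0 : c <= c0 by rewrite ge_min lexx.
have le_c : c * (supn q)%:R `^ (- u) <= c.
  by rewrite ler_piMr // powRN_le1 // ler1n supn_gt0 //.
have [rq0|rq0] := eqVneq (rbehead q) 0.
  have q00 := rbehead_eq0 rq0 q0.
  rewrite rq0 /bdot big1 => [|i _]; last by rewrite mxE mulr0.
  rewrite add0r (le_trans le_c) // (le_trans c_le1) //.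
  by rewrite -intr_norm -natr_absz ler1n absz_gt0.
case: (pselect (good_approx u (rbehead q))) => hS.
  have qX : rbehead q \in finmap.enum_fset X by move: hS; rewrite eX.
  by rewrite (le_trans le_c) // (le_trans c_le_c0) // hc0.
have lt_dist : (supn (rbehead q))%:R `^ (- u) < `|bdot (rbehead q) + (q ord0 ord0)%:~R|.
  by rewrite ltNge; apply/negP => le; apply: hS; exists (q ord0 ord0).
apply: le_trans (ltW lt_dist); rewrite -[leRHS]mul1r ler_pM ?powR_ge0 //.
by rewrite ler_powRN ?ler_nat ?supn_rbehead // ltr0n supn_gt0.
Qed.

End diophantine.

Section box.
Variables n K : nat.

Definition box_point (t : {ffun 'I_n -> 'I_(2 * K).+1}) : 'rV[int]_n :=
  \row_i ((t i : nat)%:Z - K%:Z).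

Lemma supn_box_point t : (supn (box_point t) <= K)%N.
Proof.
apply/bigmax_leqP => i _; rewrite mxE.
by have := ltn_ord (t i); move: (nat_of_ord (t i)); lia.
Qed.

Lemma supn_box_pointB t t' : (supn (box_point t - box_point t') <= 2 * K)%N.
Proof.
apply/bigmax_leqP => i _; rewrite !mxE.
have := ltn_ord (t i); have := ltn_ord (t' i).
by move: (nat_of_ord (t i)) (nat_of_ord (t' i)); lia.
Qed.

Lemma box_point_inj : injective box_point.
Proof.
move=> t t' /rowP ett'; apply/ffunP => i; apply: ord_inj.
by have := ett' i; rewrite !mxE => /addIr /eqP; rewrite eqz_nat => /eqP.
Qed.

Lemma box_pointP (q : 'rV[int]_n) : (supn q <= K)%N -> exists t, box_point t = q.
Proof.
move=> qK; have qiK i : (absz (q ord0 i + K%:Z)%R < (2 * K).+1)%N.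
  by have := leq_supn q i; move: qK; lia.
exists [ffun i => Ordinal (qiK i)]; apply/rowP => i; rewrite !mxE ffunE /=.
have -> : (0 : 'I_1) = ord0 by apply: ord_inj.
by have := leq_supn q i; move: qK; lia.
Qed.

End box.

Section A_set_measure.
Variables (R : realType) (n : nat) (b : 'rV[R]_(n.-1)).

Lemma btqB (q1 q2 : 'rV[int]_n) : btq b (q1 - q2) = btq b q1 - btq b q2.
Proof. by rewrite /btq -sumrB; apply: eq_bigr => i _; rewrite !mxE intrB mulrBr. Qed.

Lemma norm_btq_le (q : 'rV[int]_n) :
  `|btq b q| <= (\sum_i `|btilde b i|) * (supn q)%:R.
Proof.
rewrite /btq mulr_suml; apply: le_trans (ler_norm_sum _ _ _) _.
apply: ler_sum => i _; rewrite normrM ler_wpM2l //.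
by rewrite -intr_norm -natr_absz ler_nat leq_supn.
Qed.

Lemma A_set_sub_strips (v Q : R) : 0 <= Q ->
  A_set b v Q `<=` \bigcup_(t : {ffun 'I_n -> 'I_(2 * Num.truncn (2 * Q)).+1})
    (if Q <= (supn (box_point t))%:R then strip (btq b (box_point t)) (Q `^ (- v))
     else set0).
Proof.
move=> Q0 x [x01 [p [q [/andP[Qq q2Q] hx]]]].
have [|t qt] := @box_pointP n (Num.truncn (2 * Q)) q.
  by rewrite truncn_ge_nat ?mulr_ge0 // ltW.
by exists t => //; rewrite qt Qq; split => //; exists p.
Qed.

Lemma btq_separated (c u Q : R) : 0 < c -> 0 <= u ->
  (forall q : 'rV[int]_n, q != 0 -> c * (supn q)%:R `^ (- u) <= `|btq b q|) ->
  forall q, q != 0 -> (supn q)%:R <= 4 * Q -> c * (4 * Q) `^ (- u) <= `|btq b q|.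
Proof.
move=> c0 u0 hc q q0 qQ; apply: le_trans (hc q q0); rewrite ler_wpM2l ?(ltW c0) //.
by rewrite ler_powRN // ltr0n supn_gt0.
Qed.

(* A strip has measure O(d + d / |a|); the [a]'s are the values [btq b q] on
   the box, which are [s]-separated and bounded by [B * 2Q]. *)
Lemma lebesgue_measure_A_set_le (v Q s : R) : 0 <= v -> 1 <= Q -> 0 < s ->
  (forall q, q != 0 -> (supn q)%:R <= 4 * Q -> s <= `|btq b q|) ->
  (lebesgue_measure (A_set b v Q) <=
    (4 * Q `^ (- v) * (5 * Q) ^+ n + 24 / s * Q `^ (- v) *
     (1 + ln ((Num.truncn ((\sum_i `|btilde b i|) * (2 * Q) / s)).+1)%:R))%:E)%E.
Proof.
move=> v0 Q1 s0 sep; set d := Q `^ (- v); set K := Num.truncn (2 * Q).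
set B := \sum_i `|btilde b i|.
have Q0 : 0 < Q by lra.
have d0 : 0 <= d by exact: powR_ge0.
have d1 : d <= 1 by exact: powRN_le1.
have KQ : (K%:R : R) <= 2 * Q by rewrite truncn_le mulr_ge0 //; lra.
pose a t := btq b (@box_point n K t).
pose P t := Q <= (supn (@box_point n K t))%:R.
have a_ge t : P t -> s <= `|a t|.
  move=> Pt; apply: sep.
    by rewrite -supn_eq0 -lt0n -(ltr0n R); exact: lt_le_trans Q0 Pt.
  by rewrite (le_trans _ (_ : 2 * Q <= 4 * Q)) ?(le_trans _ KQ) ?ler_nat ?supn_box_point //; lra.
have a_sep t t' : P t -> P t' -> t != t' -> s <= `|a t - a t'|.
  move=> _ _ tt'; rewrite /a -btqB; apply: sep.
    by rewrite subr_eq0; apply: contra tt' => /eqP /box_point_inj ->.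
  apply: le_trans (_ : (2 * K)%:R <= _); first by rewrite ler_nat supn_box_pointB.
  by rewrite natrM; lra.
have a_le t : P t -> `|a t| <= B * (2 * Q).
  move=> _; apply: le_trans (norm_btq_le _) _; rewrite ler_wpM2l ?sumr_ge0 //.
  by apply: le_trans KQ; rewrite ler_nat supn_box_point.
have cover := @A_set_sub_strips v Q (ltW Q0).
apply: le_trans (le_outer_measure lebesgue_measure _ _ cover) _.
apply: le_trans
  (_ : _ <= \sum_t lebesgue_measure (if P t then strip (a t) d else set0))%E _.
  exact: outer_measure_bigcup_fin.
apply: le_trans (_ : _ <= (\sum_(t | P t) (4 * d + 6 * d / `|a t|))%:E)%E _.
  rewrite -sumEFin [X in (_ <= X)%E]big_mkcond /=; apply: lee_sum => t _.
  rewrite /P; case: ifP => Pt; last by rewrite measure0.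
  apply: lebesgue_measure_strip_le; last by rewrite d0 d1.
  by rewrite -normr_gt0; apply: lt_le_trans (a_ge t Pt).
rewrite lee_fin big_split /=; apply: lerD.
  apply: le_trans (_ : \sum_(t : {ffun 'I_n -> 'I_(2 * K).+1}) 4 * d <= _).
    by rewrite [X in _ <= X](bigID P) /= lerDl sumr_ge0 // => t _; rewrite mulr_ge0.
  rewrite sumr_const card_ffun !card_ord -[4 * d *+ _]mulr_natr natrX ler_wpM2l ?mulr_ge0 //.
  by rewrite lerXn2r ?nnegrE ?mulr_ge0 ?(ltW Q0) // -natr1 natrM; lra.
rewrite -mulr_sumr; apply: le_trans (ler_wpM2l _ (sum_inv_separated_le s0 a_ge a_sep a_le)) _.
  by rewrite mulr_ge0.
by rewrite le_eqVlt; apply/orP; left; apply/eqP; ring.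
Qed.

End A_set_measure.

(* With [s := c (4Q)^-u] and [ln L <= L^e / e], every term is [Q] to a power at
   most [(n - v) / 2]. *)
Lemma measure_bound_le_powR (R : realType) (n : nat) (Q v u e c B : R) :
  1 < Q -> n%:R < v -> 0 < u -> 0 < e -> 0 < c -> 0 <= B ->
  u - v + (u + 1) * e <= (n%:R - v) / 2 ->
  4 * Q `^ (- v) * (5 * Q) ^+ n + 24 / (c * (4 * Q) `^ (- u)) * Q `^ (- v) *
    (1 + ln ((Num.truncn (B * (2 * Q) / (c * (4 * Q) `^ (- u)))).+1)%:R)
  <= (4 * 5 ^+ n + 24 * (4 `^ u / c) * (1 + (2 * B * 4 `^ u / c + 1) `^ e / e))
     * Q `^ ((n%:R - v) / 2).
Proof.
move=> Q1 nv u0 e0 c0 B0 expo.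
set X := Q `^ ((n%:R - v) / 2); set s := c * (4 * Q) `^ (- u).
set L := Num.truncn (B * (2 * Q) / s); set D := 2 * B * 4 `^ u / c + 1.
have Q0 : 0 < Q by lra.
have powD x y : Q `^ x * Q `^ y = Q `^ (x + y).
  by rewrite powRD // (gt_eqF Q0) implybT.
have le_X x : x <= (n%:R - v) / 2 -> Q `^ x <= X.
  by move=> xle; apply: ler_powR => //; exact: ltW.
have invs : s^-1 = 4 `^ u / c * Q `^ u.
  rewrite /s powRN powRM ?(ltW Q0) //.
  by field; rewrite !gt_eqF ?powR_gt0.
have s0 : 0 < s by rewrite /s mulr_gt0 // powR_gt0 // mulr_gt0.
have W0 : 0 <= 4 `^ u / c by rewrite divr_ge0 ?powR_ge0 ?ltW.
have D1 : 1 <= D by rewrite /D lerDr divr_ge0 ?mulr_ge0 ?powR_ge0 // ltW.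
have L1 : (L.+1)%:R <= D * Q `^ (u + 1).
  have QL : (L%:R : R) <= (D - 1) * Q `^ (u + 1).
    have -> : (D - 1) * Q `^ (u + 1) = B * (2 * Q) / s.
      by rewrite -[_ / s]/(_ * s^-1) invs /D -powD powRr1 ?(ltW Q0) //; ring.
    by rewrite /L truncn_le divr_ge0 ?(ltW s0) // !mulr_ge0 // ltW.
  have Qu1 : 1 <= Q `^ (u + 1).
    by rewrite -[leLHS](powRr0 Q); apply: ler_powR; [exact: ltW | lra].
  have -> : D * Q `^ (u + 1) = (D - 1) * Q `^ (u + 1) + Q `^ (u + 1) by ring.
  by rewrite -natr1 lerD.
have lnL : ln (L.+1)%:R <= D `^ e / e * Q `^ ((u + 1) * e).
  apply: le_trans (ln_le_powR_div (ltr0Sn _ _) e0) _.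
  rewrite mulrAC ler_pM2r ?invr_gt0 // powRrM -powRM ?powR_ge0 ?(le_trans ler01) //.
  by apply: ge0_ler_powR; rewrite ?nnegrE ?mulr_ge0 ?powR_ge0 ?(ltW e0) ?(le_trans ler01 D1).
have term1 : Q `^ (- v) * (5 * Q) ^+ n <= 5 ^+ n * X.
  rewrite exprMn mulrCA ler_wpM2l ?exprn_ge0 // -powR_mulrn ?(ltW Q0) // powD.
  by apply: le_X; lra.
have term2 : Q `^ (- v) * Q `^ u <= X by rewrite powD le_X //; nra.
have term3 : Q `^ (- v) * Q `^ u * Q `^ ((u + 1) * e) <= X.
  by rewrite !powD le_X //; lra.
have -> : 24 / s * Q `^ (- v) * (1 + ln (L.+1)%:R) = 24 * (4 `^ u / c) *
    (Q `^ (- v) * Q `^ u + Q `^ (- v) * Q `^ u * ln (L.+1)%:R).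
  by rewrite -[24 / s]/(24 * s^-1) invs; ring.
have lnterm : Q `^ (- v) * Q `^ u * ln (L.+1)%:R <= D `^ e / e * X.
  apply: le_trans (ler_wpM2l (mulr_ge0 (powR_ge0 _ _) (powR_ge0 _ _)) lnL) _.
  by rewrite mulrCA ler_wpM2l ?divr_ge0 ?powR_ge0 ?(ltW e0) // mulrA.
rewrite [(_ + _) * X]mulrDl; apply: lerD.
  by rewrite -mulrA -[4 * 5 ^+ n * X]mulrA ler_wpM2l.
rewrite -[X in _ <= X]mulrA; apply: ler_wpM2l; first by rewrite mulr_ge0.
by rewrite [(1 + _) * X]mulrDl mul1r lerD.
Qed.

Lemma exponent_choice (R : realType) (n : nat) (v : R) : n%:R < v ->
  exists u e : R, [/\ n%:R < u, 0 < e & u - v + (u + 1) * e <= (n%:R - v) / 2].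
Proof.
move=> nv; set g := v - n%:R; have g0 : 0 < g by rewrite subr_gt0.
set u := n%:R + g / 4; have u0 : 0 < u + 1 by rewrite addr_gt0 ?ltr_wpDl ?divr_gt0.
exists u, (g / (4 * (u + 1))); split; first by rewrite ltrDl divr_gt0.
  by rewrite divr_gt0 // mulr_gt0.
have -> : (u + 1) * (g / (4 * (u + 1))) = g / 4 by field; rewrite gt_eqF.
by rewrite /u /g; lra.
Qed.

Theorem lemma4p8 (R : realType) (n : nat) (b : 'rV[R]_(n.-1)) (v : R) :
  (2 <= n)%N -> ~ @W_plus R n b -> n%:R < v ->
  exists C : R, 0 < C /\
    forall Q : R, 1 < Q ->
      (lebesgue_measure (A_set b v Q) < (C * Q `^ ((n%:R - v) / 2))%:E)%E.
Proof.
case: n b => [|m] b // _ notW nv.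
have [u [e [mu e0 expo]]] := exponent_choice nv.
have u0 : 0 < u by apply: le_lt_trans mu.
have : finite_set (good_approx b u) by apply: contrapT => inf; apply: notW; exists u.
move=> /(btq_lower_bound (ltW u0)) [c c0 hc].
have B0 : 0 <= \sum_i `|btilde b i| by exact: sumr_ge0.
set C := 4 * 5 ^+ m.+1 + 24 * (4 `^ u / c) *
  (1 + (2 * (\sum_i `|btilde b i|) * 4 `^ u / c + 1) `^ e / e).
have C0 : 0 <= C.
  have W0 : 0 <= 4 `^ u / c by rewrite divr_ge0 ?powR_ge0 // ltW.
  have D0 : 0 <= (2 * (\sum_i `|btilde b i|) * 4 `^ u / c + 1) `^ e / e.
    by rewrite divr_ge0 ?powR_ge0 // ltW.
  by apply: addr_ge0; apply: mulr_ge0 => //; [exact: mulr_ge0 | exact: addr_ge0].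
exists (C + 1); split => [|Q Q1]; first by rewrite ltr_pwDr.
have s0 : 0 < c * (4 * Q) `^ (- u) by rewrite mulr_gt0 ?powR_gt0 ?mulr_gt0 //; lra.
have sep := btq_separated (Q := Q) c0 (ltW u0) hc.
apply: le_lt_trans (lebesgue_measure_A_set_le _ (ltW Q1) s0 sep) _.
  exact: ltW (le_lt_trans (ler0n _ _) nv).
rewrite lte_fin; apply: le_lt_trans (measure_bound_le_powR Q1 nv u0 e0 c0 B0 expo) _.
by rewrite ltr_pM2r ?powR_gt0 ?ltrDl //; lra.
Qed.
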